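(* Let $L$ be a finite-dimensional pure, nonnilpotent, solvable Lie algebra over $\mathbb{C}$ of breadth $2$ such that $\dim[L,L]=2$ and $\dim L^k=2$ for all integers $k\geq 2$. Then there exists an abelian subalgebra $A$ of $L$ such that $L=A\ltimes[L,L]$ (i.e. $L=A\oplus[L,L]$ as vector spaces, with $[L,L]$ an ideal).
   Context: For $x\in L$, $b(x)=\mathrm{rank}(\mathrm{ad}_x)$ and the breadth of $L$ is $b(L)=\max\{b(x)\mid x\in L\}$. $L$ is pure if it has no abelian ideal as a direct summand; equivalently $Z(L)\subseteq[L,L]$, where $Z(L)$ is the center. The lower central series is indexed by $L^0=L$, $L^1=[L,L]$, $L^k=[L,L^{k-1}]$ for $k\geq 2$. *)

From HB Require Import structures.
From mathcomp Require Import all_boot all_order all_algebra.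
From mathcomp Require Import reals complex Rstruct.
Set Implicit Arguments. Unset Strict Implicit. Unset Printing Implicit Defensive.
Import Order.TTheory GRing.Theory Num.Theory.
Local Open Scope ring_scope.


Definition Cplx : fieldType := (Rdefinitions.R)[i].

Section Lie.
Variables (F : fieldType) (V : vectType F) (br : V -> V -> V).

Definition is_lie_bracket : Prop :=
  [/\ (forall (a : F) (x y z : V), br (a *: x + y) z = a *: br x z + br y z),
      (forall (a : F) (x y z : V), br x (a *: y + z) = a *: br x y + br x z),
      (forall x : V, br x x = 0) &
      (forall x y z : V, br x (br y z) + br y (br z x) + br z (br x y) = 0)].

Definition brsp (U W : {vspace V}) : {vspace V} :=
  (<<[seq br u w | u <- vbasis U, w <- vbasis W]>>)%VS.

(* Lower central series: L^0 = L, L^1 = [L,L], L^k = [L, L^(k-1)]. *)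
Fixpoint lcs (k : nat) : {vspace V} :=
  if k is k'.+1 then brsp fullv (lcs k') else fullv.

Fixpoint dser (k : nat) : {vspace V} :=
  if k is k'.+1 then brsp (dser k') (dser k') else fullv.

Definition lie_solvable : Prop := exists n, dser n = 0%VS.
Definition lie_nilpotent : Prop := exists n, lcs n = 0%VS.

Definition subalgebra (U : {vspace V}) : Prop :=
  forall x y, x \in U -> y \in U -> br x y \in U.
Definition ideal (U : {vspace V}) : Prop :=
  forall x y, y \in U -> br x y \in U.
Definition abelian_sub (U : {vspace V}) : Prop :=
  forall x y, x \in U -> y \in U -> br x y = 0.

Definition lie_pure : Prop :=
  forall I J : {vspace V}, ideal I -> ideal J -> abelian_sub I ->
    directv (I + J)%VS -> (I + J)%VS = fullv -> I = 0%VS.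

Definition breadth_elt (x : V) : nat := \dim (limg (linfun (br x)))%VS.

Definition has_breadth (n : nat) : Prop :=
  (forall x, breadth_elt x <= n)%N /\ exists x, breadth_elt x = n.

End Lie.

(** Only dim D = 2 and [L, D] = D for D := [L, L] are needed, over any field.
    First D is abelian: otherwise [D, D] is a line <y> and Jacobi forces
    [L, D] into <y>.  Hence the operators ad z restricted to D commute, and
    a 2x2 case analysis (ad z1 semisimple or nilpotent of rank one) shows
    that if they were all singular on D, all of [L, D] would lie in a line.
    So some ad z0 is injective on D; its kernel A is then a complement of D
    (rank-nullity, as ad z0 maps L into D), and A is abelian because
    [z0, [x, y]] = 0 for x, y in A by Jacobi, with [x, y] in D. *)

From HB Require Import structures.
From mathcomp Require Import all_boot all_order all_algebra.
From mathcomp Require Import reals complex Rstruct.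
From Stdlib Require Import Classical_Prop.
Import Order.TTheory GRing.Theory Num.Theory.
Local Open Scope ring_scope.
Set Implicit Arguments. Unset Strict Implicit.

Section TwoDimensional.
Variables (F : fieldType) (V : vectType F).

Lemma scale2_eq0 (e1 e2 : V) a b : e1 != 0 -> e2 \notin <[e1]>%VS ->
  a *: e1 + b *: e2 = 0 -> a = 0 /\ b = 0.
Proof.
move=> ne1 ne2 h.
have b0 : b = 0.
  apply/eqP; apply: contraNT ne2 => nb; apply/vlineP; exists (- (b^-1 * a)).
  have -> : e2 = b^-1 *: (b *: e2) by rewrite scalerA mulVf ?scale1r.
  by rewrite -(addr0_eq h) scalerN scalerA scaleNr.
split=> //; move/eqP: h; rewrite b0 scale0r addr0 scaler_eq0 (negbTE ne1) orbF.
by move/eqP.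
Qed.

Lemma dim2_coord (D : {vspace V}) (e1 e2 : V) : \dim D = 2%N ->
  e1 \in D -> e2 \in D -> e1 != 0 -> e2 \notin <[e1]>%VS ->
  forall x, x \in D -> exists a b, x = a *: e1 + b *: e2.
Proof.
move=> dD e1D e2D ne1 ne2 x.
have ne20 : e2 != 0 by apply: contraNneq ne2 => ->; apply: mem0v.
have cap : (<[e1]> :&: <[e2]> = 0)%VS.
  apply/eqP; rewrite -subv0; apply/subvP => y /memv_capP [/vlineP [a ->]].
  case/vlineP=> b eb; have [-> _] : a = 0 /\ - b = 0.
    by apply: (scale2_eq0 ne1 ne2); rewrite eb scaleNr subrr.
  by rewrite scale0r mem0v.
have <- : (<[e1]> + <[e2]> = D)%VS.
  apply/eqP; rewrite eqEdim subv_add -!memvE e1D e2D /=.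
  by rewrite dimv_disjoint_sum // !dim_vline ne1 ne20 dD.
by case/memv_addP=> _ /vlineP [a ->] [_ /vlineP [b ->] ->]; exists a, b.
Qed.

Lemma triangular2_singular (D : {vspace V}) (f : {linear V -> V}) e1 e2 a b c x :
  \dim D = 2%N -> e1 \in D -> e2 \in D -> e1 != 0 -> e2 \notin <[e1]>%VS ->
  f e1 = a *: e1 -> f e2 = c *: e1 + b *: e2 ->
  x \in D -> x != 0 -> f x = 0 -> a * b = 0.
Proof.
move=> dD e1D e2D ne1 ne2 fe1 fe2 /(dim2_coord dD e1D e2D ne1 ne2) [p [q ->]] nx.
rewrite linearD !linearZ /= fe1 fe2 scalerDr !scalerA addrA -scalerDl.
case/(scale2_eq0 ne1 ne2)=> h1 /eqP; rewrite mulf_eq0 => /orP [/eqP q0 | /eqP ->].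
  move: nx h1; rewrite q0 mul0r addr0 scale0r addr0 => nx /eqP.
  have np : p != 0 by apply: contraNneq nx => ->; rewrite scale0r.
  by rewrite mulf_eq0 (negbTE np) => /eqP ->; rewrite mul0r.
by rewrite mulr0.
Qed.

End TwoDimensional.

Section LieBracket.
Variables (F : fieldType) (V : vectType F) (br : V -> V -> V).
Hypothesis lie : is_lie_bracket br.

Lemma br_linear z : linear (br z).
Proof. by case: lie => _ h _ _ a x y; rewrite h. Qed.
Lemma br_linear_left z : linear (br^~ z).
Proof. by case: lie => h _ _ _ a x y; rewrite h. Qed.

Definition ad z : {linear V -> V} :=
  HB.pack (br z) (GRing.isLinear.Build _ _ _ _ (br z) (br_linear z)).
Definition ad_left z : {linear V -> V} :=
  HB.pack (br^~ z) (GRing.isLinear.Build _ _ _ _ (br^~ z) (br_linear_left z)).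

Lemma br0r z : br z 0 = 0. Proof. exact: (linear0 (ad z)). Qed.
Lemma br0l z : br 0 z = 0. Proof. exact: (linear0 (ad_left z)). Qed.
Lemma brDr z x y : br z (x + y) = br z x + br z y. Proof. exact: (linearD (ad z)). Qed.
Lemma brDl z x y : br (x + y) z = br x z + br y z. Proof. exact: (linearD (ad_left z)). Qed.
Lemma brZr z a x : br z (a *: x) = a *: br z x. Proof. exact: (linearZZ (ad z)). Qed.
Lemma brZl z a x : br (a *: x) z = a *: br x z. Proof. exact: (linearZZ (ad_left z)). Qed.
Lemma brNr z x : br z (- x) = - br z x. Proof. exact: (linearN (ad z)). Qed.
Lemma br_sumr z n (f : 'I_n -> V) : br z (\sum_i f i) = \sum_i br z (f i).
Proof. exact: (linear_sum (ad z)). Qed.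
Lemma br_suml z n (f : 'I_n -> V) : br (\sum_i f i) z = \sum_i br (f i) z.
Proof. exact: (linear_sum (ad_left z)). Qed.

Lemma brxx x : br x x = 0. Proof. by case: lie. Qed.
Lemma jacobi x y z : br x (br y z) + br y (br z x) + br z (br x y) = 0.
Proof. by case: lie. Qed.

Lemma br_anti x y : br x y = - br y x.
Proof.
apply/eqP; rewrite -subr_eq0 opprK.
by have := brxx (x + y); rewrite brDl !brDr !brxx add0r addr0 => ->.
Qed.

Lemma mem_brsp (U W : {vspace V}) x y : x \in U -> y \in W -> br x y \in brsp br U W.
Proof.
move=> xU yW; rewrite (coord_vbasis xU) (coord_vbasis yW) br_suml.
apply: rpred_sum => i _; rewrite brZl br_sumr; apply: rpredZ.
apply: rpred_sum => j _; rewrite brZr; apply: rpredZ.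
by apply/memv_span/allpairs_f; apply: mem_nth; rewrite size_tuple.
Qed.

Lemma brsp_subv (U W X : {vspace V}) :
  (forall x y, x \in U -> y \in W -> br x y \in X) -> (brsp br U W <= X)%VS.
Proof.
move=> h; apply/span_subvP => _ /allpairsP [[u w] [/= /vbasis_mem uU /vbasis_mem wW ->]].
exact: h.
Qed.

Definition centralizer z : {vspace V} := lker (linfun (ad z)).

Lemma memv_centralizer z x : (x \in centralizer z) = (br z x == 0).
Proof. by rewrite memv_ker lfunE. Qed.

Section DerivedPlane.
Variable D : {vspace V}.
Hypothesis dimD : \dim D = 2%N.
Hypothesis brD : forall x y, br x y \in D.
Hypothesis brsp_fullD : brsp br fullv D = D.

Local Ltac mem_line :=
  repeat (apply: rpredD || apply: rpredZ || rewrite rpredN || apply: memv_line || apply: mem0v).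

Lemma brsp_not_in_line u : ~ (forall z d, d \in D -> br z d \in <[u]>%VS).
Proof.
move=> h; have : (D <= <[u]>)%VS.
  by rewrite -{1}brsp_fullD; apply: brsp_subv => x y _; apply: h.
by move/dimvS; rewrite dimD dim_vline; case: (u != 0).
Qed.

Section NonAbelian.
Variables d1 d2 : V.
Hypotheses (d1D : d1 \in D) (d2D : d2 \in D) (ny : br d1 d2 != 0).
Local Notation y := (br d1 d2).

Let nd1 : d1 != 0.
Proof. by apply: contraNneq ny => ->; rewrite br0l. Qed.

Let nd2 : d2 \notin <[d1]>%VS.
Proof. by apply: contra ny => /vlineP [c ->]; rewrite brZr brxx scaler0. Qed.

Lemma br_derived_line a b : a \in D -> b \in D -> br a b \in <[y]>%VS.
Proof.
have dec := dim2_coord dimD d1D d2D nd1 nd2.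
move=> /dec [a1 [b1 ->]] /dec [a2 [b2 ->]].
rewrite brDl !brDr !brZl !brZr !brxx (br_anti d2 d1); mem_line.
Qed.

Lemma derived_eigenvector :
  exists2 x0, x0 \in D & exists2 al, al != 0 & br x0 y = al *: y.
Proof.
(* If y = p d1 + q d2, then [d1, y] = q y and [d2, y] = - p y. *)
have [p [q ey]] := dim2_coord dimD d1D d2D nd1 nd2 (brD d1 d2).
have [q0 | nq] := eqVneq q 0; last first.
  by exists d1 => //; exists q; rewrite // {1}ey brDr !brZr brxx scaler0 add0r.
exists d2 => //; exists (- p).
  by apply: contraNneq ny => /eqP; rewrite oppr_eq0 ey q0 => /eqP ->; rewrite !scale0r addr0.
by rewrite {1}ey q0 scale0r addr0 brZr (br_anti d2 d1) scalerN scaleNr.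
Qed.

Lemma non_abelian_derived_false : False.
Proof.
have [x0 x0D [al nal hal]] := derived_eigenvector.
have nx0 : x0 \notin <[y]>%VS.
  apply/negP => /vlineP [c ex]; move/eqP: hal; rewrite ex brZl brxx scaler0 eq_sym.
  by rewrite scaler_eq0 (negbTE nal) (negbTE ny).
have dec := dim2_coord dimD (brD d1 d2) x0D ny nx0.
apply: (@brsp_not_in_line y) => z d /dec [p [q ->]].
have [c hc] : exists c, br z y = c *: y.
  apply/vlineP; move/eqP: (jacobi z d1 d2); rewrite -addrA addr_eq0 => /eqP ->.
  by rewrite rpredN; apply: rpredD; apply: br_derived_line.
have [a [b hb]] := dec _ (brD z x0).
have b0 : b = 0.
  have := jacobi z x0 y; rewrite hal brZr hc (br_anti y z) hc brNr brZr hal hb.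
  rewrite brDr !brZr brxx (br_anti y x0) hal scaler0 add0r !scalerN !scalerA.
  rewrite (mulrC c al) addrN add0r => /eqP; rewrite oppr_eq0 scaler_eq0 (negbTE ny) orbF.
  by rewrite mulf_eq0 (negbTE nal) orbF => /eqP.
by rewrite brDr !brZr hc hb b0 scale0r addr0; mem_line.
Qed.

End NonAbelian.

Lemma derived_abelian d1 d2 : d1 \in D -> d2 \in D -> br d1 d2 = 0.
Proof.
move=> d1D d2D; apply/eqP/negPn/negP => ny.
exact: (non_abelian_derived_false d1D d2D ny).
Qed.

Lemma ad_commute_on_derived z1 z2 d : d \in D -> br z1 (br z2 d) = br z2 (br z1 d).
Proof.
move=> dD; have := jacobi z1 z2 d.
rewrite (derived_abelian dD (brD z1 z2)) addr0 (br_anti d z1) brNr => /eqP.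
by rewrite subr_eq0 => /eqP.
Qed.

Section AllSingular.
Hypothesis ad_singular : forall z, exists d, [/\ d \in D, d != 0 & br z d = 0].
Variables (z1 d0 k : V).
Hypotheses (d0D : d0 \in D) (nu : br z1 d0 != 0).
Hypotheses (kD : k \in D) (nk : k != 0) (hk : br z1 k = 0).
Local Notation u := (br z1 d0).

Let nd0 : d0 \notin <[k]>%VS.
Proof. by apply: contra nu => /vlineP [c ->]; rewrite brZr hk scaler0. Qed.

Let ad_image_line x : x \in D -> br z1 x \in <[u]>%VS.
Proof.
case/(dim2_coord dimD kD d0D nk nd0)=> p [q ->].
by rewrite brDr !brZr hk scaler0 add0r; mem_line.
Qed.

Let ad_kernel_line x : x \in D -> br z1 x = 0 -> x \in <[k]>%VS.
Proof.
case/(dim2_coord dimD kD d0D nk nd0)=> p [q ->].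
rewrite brDr !brZr hk scaler0 add0r => /eqP; rewrite scaler_eq0 (negbTE nu) orbF.
by move/eqP->; rewrite scale0r addr0; mem_line.
Qed.

Let ad_image_stable z : exists c, br z u = c *: u.
Proof. by apply/vlineP; rewrite -ad_commute_on_derived //; apply/ad_image_line/brD. Qed.

Lemma nilpotent_rank_one_false : br z1 u = 0 -> False.
Proof.
move=> tu; have nd0u : d0 \notin <[u]>%VS.
  by apply: contra nu => /vlineP [c ->]; rewrite brZr tu scaler0.
have dec := dim2_coord dimD (brD z1 d0) d0D nu nd0u.
apply: (@brsp_not_in_line u) => z d /dec [p [q ->]].
have [a ha] := ad_image_stable z.
have [al [be hR]] := dec _ (brD z d0).
have ebe : be = a.
  have := ad_commute_on_derived z1 z d0D; rewrite hR brDr !brZr tu scaler0 add0r ha.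
  by move/eqP; rewrite -subr_eq0 -scalerBl scaler_eq0 (negbTE nu) orbF subr_eq0 => /eqP.
rewrite {}ebe in hR.
(* In the basis (u, d0), ad z is triangular with both diagonal entries a. *)
have a0 : a = 0.
  have [x [xD nx hx]] := ad_singular z.
  have := triangular2_singular (f := ad z) dimD (brD z1 d0) d0D nu nd0u ha hR xD nx hx.
  by move/eqP; rewrite mulf_eq0 orbb => /eqP.
by rewrite brDr !brZr ha hR a0 !scale0r addr0; mem_line.
Qed.

Lemma semisimple_rank_one_false : br z1 u != 0 -> False.
Proof.
move=> ntu; have nuk : u \notin <[k]>%VS.
  by apply: contra ntu => /vlineP [c ->]; rewrite brZr hk scaler0.
have [t ht] := ad_image_stable z1.
have nt : t != 0 by apply: contra ntu => /eqP t0; rewrite ht t0 scale0r.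
have dec := dim2_coord dimD kD (brD z1 d0) nk nuk.
apply: (@brsp_not_in_line u) => z d /dec [p [q ->]].
have [a ha] : exists a, br z k = a *: k.
  apply/vlineP; apply: ad_kernel_line; first exact: brD.
  by rewrite ad_commute_on_derived // hk br0r.
have [b hb] := ad_image_stable z.
(* In the basis (k, u), ad z = diag(a, b) and ad (z1 + z) = diag(a, t + b)
   are both singular. *)
have a0 : a = 0.
  have [x [xD nx hx]] := ad_singular z.
  have [w [wD nw hw]] := ad_singular (z1 + z).
  have hb' : br z u = 0 *: k + b *: u by rewrite scale0r add0r.
  have ab0 := triangular2_singular (f := ad z) dimD kD (brD z1 d0) nk nuk ha hb' xD nx hx.
  have ha' : br (z1 + z) k = a *: k by rewrite brDl hk add0r.
  have htb : br (z1 + z) u = 0 *: k + (t + b) *: u by rewrite brDl ht hb scale0r add0r scalerDl.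
  have := triangular2_singular (f := ad (z1 + z)) dimD kD (brD z1 d0) nk nuk ha' htb wD nw hw.
  move: ab0 => /eqP; rewrite !mulf_eq0 => /orP [/eqP // | /eqP ->].
  by rewrite addr0 => /eqP; rewrite mulf_eq0 (negbTE nt) orbF => /eqP.
by rewrite brDr !brZr ha hb a0 scale0r scaler0 add0r; mem_line.
Qed.

End AllSingular.

Lemma exists_ad_injective_on_derived :
  exists z0, forall d, d \in D -> br z0 d = 0 -> d = 0.
Proof.
apply: NNPP => hn.
have ad_singular z : exists d, [/\ d \in D, d != 0 & br z d = 0].
  apply: NNPP => hz; apply: hn; exists z => d dD e.
  by apply/eqP/negPn/negP => nd; apply: hz; exists d.
have [z1 [d0 [d0D nu]]] : exists z1 d0, d0 \in D /\ br z1 d0 != 0.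
  apply: NNPP => h; apply: (@brsp_not_in_line 0) => z d dD.
  suff -> : br z d = 0 by apply: mem0v.
  by apply/eqP/negPn/negP => nz; apply: h; exists z, d.
have [k [kD nk hk]] := ad_singular z1.
have [tu | ntu] := eqVneq (br z1 (br z1 d0)) 0.
  exact: (nilpotent_rank_one_false ad_singular d0D nu kD nk hk tu).
exact: (semisimple_rank_one_false ad_singular d0D nu kD nk hk ntu).
Qed.

Section InjectiveOnDerived.
Variable z0 : V.
Hypothesis inj : forall d, d \in D -> br z0 d = 0 -> d = 0.

Lemma centralizer_abelian : abelian_sub br (centralizer z0).
Proof.
move=> x y; rewrite !memv_centralizer => /eqP hx /eqP hy; apply: inj; first exact: brD.
by have := jacobi z0 x y; rewrite hx br0r addr0 (br_anti y) hy oppr0 br0r addr0.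
Qed.

Lemma centralizer_derived_directv : directv (centralizer z0 + D).
Proof.
apply/directv_addP/eqP; rewrite -subv0; apply/subvP => x /memv_capP [].
by rewrite memv_centralizer memv0 => /eqP hx xD; apply/eqP/inj.
Qed.

Lemma centralizer_derived_addv : (centralizer z0 + D)%VS = fullv.
Proof.
apply/eqP; rewrite eqEdim subvf (directvP centralizer_derived_directv) /=.
rewrite -(limg_ker_dim (linfun (ad z0)) fullv) capfv leq_add2l dimD.
rewrite -dimD; apply: dimvS; apply/subvP => _ /memv_imgP [v _ ->].
by rewrite lfunE; apply: brD.
Qed.

End InjectiveOnDerived.

End DerivedPlane.

End LieBracket.

Theorem proposition3p8 (V : vectType Cplx) (br : V -> V -> V) :
  is_lie_bracket br ->
  lie_pure br -> ~ lie_nilpotent br -> lie_solvable br ->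
  has_breadth br 2 ->
  \dim (lcs br 1) = 2%N ->
  (forall k : nat, (2 <= k)%N -> \dim (lcs br k) = 2%N) ->
  exists A : {vspace V},
    subalgebra br A /\ abelian_sub br A /\
    ideal br (lcs br 1) /\
    directv (A + lcs br 1)%VS /\ (A + lcs br 1)%VS = fullv.
Proof.
move=> lie _ _ _ _ dim1 dimk.
have brD x y : br x y \in lcs br 1 by apply: (mem_brsp lie); apply: memvf.
have brsp_fullD : brsp br fullv (lcs br 1) = lcs br 1.
  apply/eqP; rewrite eqEdim dim1 -(dimk 2%N) // leqnn andbT.
  by apply: brsp_subv => x y _ _; apply: brD.
have [z0 inj] := exists_ad_injective_on_derived lie dim1 brD brsp_fullD.
have abelA := centralizer_abelian brD inj.
exists (centralizer lie z0); split; first by move=> x y xA yA; rewrite abelA ?mem0v.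
split=> //; split; first by move=> x y _; apply: brD.
split; first exact: (centralizer_derived_directv lie inj).
exact: (centralizer_derived_addv lie dim1 brD inj).
Qed.
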